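(* Let $\gamma_0=\frac{\log(3/2)}{\log2}-\frac12$. For every sufficiently small $\varepsilon>0$, every positive integer $L$ and every $Y\ge1$, \[ \sum_{\substack{\ell\mid L^\infty\\ \ell>Y}}\frac{\ell^{1+\varepsilon}}{\nu(\ell)^2}\Big(\sum_{d\mid\ell}c_\ell(d)\Big)^2\ll_\varepsilon Y^{-2\gamma_0+2\varepsilon}\tau(L). \]
   Context: $\nu$ is the completely multiplicative function with $\nu(p)=p+1$; $\tau$ is the divisor function; $\ell\mid L^\infty$ means every prime factor of $\ell$ divides $L$. The Chebyshev coefficients $c_{j,n}$ are defined by $x^n=\sum_{j=0}^n c_{j,n}U_j(x/2)$, with $U_j$ the Chebyshev polynomials of the second kind; for $d\mid\ell$, $c_\ell(d)=\prod_{p\mid\ell}c_{j_p,n_p}$ where $p^{j_p}\|d$, $p^{n_p}\|\ell$. *)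

From mathcomp Require Import all_boot.
From Stdlib Require Import Reals ClassicalEpsilon.

Set Implicit Arguments. Unset Strict Implicit. Unset Printing Implicit Defensive.

Definition nu (l : nat) : nat :=
  (\prod_(p <- primes l) (p.+1) ^ (logn p l))%N.

Definition tau (n : nat) : nat := size (divisors n).

Definition divides_pow_inf (l L : nat) : bool :=
  (0 < l)%N && all (fun p => p %| L) (primes l).

Open Scope R_scope.

(* (U_j(x), U_{j+1}(x)) with U_0 = 1, U_1 = 2x, U_{j+2} = 2x U_{j+1} - U_j *)
Fixpoint chebU_pair (j : nat) (x : R) : R * R :=
  match j with
  | O => (1, 2 * x)
  | S k => let (a, b) := chebU_pair k x in (b, 2 * x * b - a)
  end.

Definition chebU (j : nat) (x : R) : R := fst (chebU_pair j x).

Definition cheb_coeffs (n : nat) : nat -> R :=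
  epsilon (inhabits (fun _ : nat => 0))
    (fun c : nat -> R =>
       forall x : R, x ^ n = sum_f_R0 (fun j => c j * chebU j (x / 2)) n).

Definition cjn (j n : nat) : R := cheb_coeffs n j.

Definition c_ell (l d : nat) : R :=
  \big[Rmult/1]_(p <- primes l) cjn (logn p d) (logn p l).

Definition sum_c_ell (l : nat) : R :=
  \big[Rplus/0]_(d <- divisors l) c_ell l d.

Definition term (eps : R) (l : nat) : R :=
  Rpower (INR l) (1 + eps) / (INR (nu l)) ^ 2 * (sum_c_ell l) ^ 2.

Definition partial_sum (eps : R) (L : nat) (Y : R) (N : nat) : R :=
  sum_f_R0 (fun l => if divides_pow_inf l L
                     then (if Rlt_dec Y (INR l) then term eps l else 0)
                     else 0) N.

Definition gamma0 : R := ln (3 / 2) / ln 2 - 1 / 2.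

(* The divisor sum [sum_{d | l} c_l(d)] factors as [prod_{p^n || l} sum_j c_{j,n}], and
   [c_{j,n}] counts nonnegative walks of [n] steps +-1 ending at height [j], so the
   divisor sum is at most [2 ^ Omega(l)].  Rankin's trick with [s = 2 gamma0 - 2 eps]
   bounds the tail [l > Y] by [Y^(-s)] times the Euler product over [p | L] of the
   geometric series in the local factor [4 p^(1 + 2 gamma0 - eps) / (p + 1)^2].
   Since [2^(2 gamma0) = 9/8] this factor is [2^(-eps)] at [p = 2]; it stays below
   [2^(-eps) < 1] for every prime and below [1/2] for [p >= 16].  Hence every Euler
   factor is at most [2], except for the primes below 16, which contribute a constant,
   and [2^omega(L) <= tau(L)]. *)

From Stdlib Require Import Reals ClassicalEpsilon Lra.
From mathcomp Require Import all_boot all_order all_algebra.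
From mathcomp Require Import Rstruct zify.
Set Implicit Arguments.
Unset Strict Implicit.
Unset Printing Implicit Defensive.

Import Order.TTheory GRing.Theory Num.Theory.

Local Open Scope ring_scope.

(* [ballot n j] counts the walks of [n] steps +-1 from 0 to [j] that stay
   nonnegative; these are the coefficients c_{j,n}. *)
Fixpoint ballot (n j : nat) : nat :=
  match n with
  | O => (j == 0)%N
  | n'.+1 => ((if j is j'.+1 then ballot n' j' else 0) + ballot n' j.+1)%N
  end.

Lemma ballot_gt n j : (n < j)%N -> ballot n j = 0%N.
Proof. by elim: n j => [|n IH] [|j] //= ltnj; rewrite !IH //; lia. Qed.

Lemma sum_ballot_le n K : (\sum_(j < K) ballot n j <= 2 ^ n)%N.
Proof.
elim: n K => [|n IH] [|K]; rewrite ?big_ord0 //.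
  by rewrite big_ord_recl /= big1.
rewrite big_split /= expnS mul2n -addnn leq_add //.
  by rewrite big_ord_recl /= add0n; exact: IH.
by apply: leq_trans (IH K.+2); rewrite [X in (_ <= X)%N]big_ord_recl leq_addl.
Qed.

Section ChebyshevPolynomials.

Variable R : comNzRingType.

(* The polynomials [U_j (X / 2)], by the recurrence of [chebU_pair]. *)
Fixpoint chebUh_pair (j : nat) : {poly R} * {poly R} :=
  match j with
  | O => (1, 'X)
  | S k => let (a, b) := chebUh_pair k in (b, 'X * b - a)
  end.

Definition chebUh j := (chebUh_pair j).1.

Lemma chebUh0 : chebUh 0 = 1. Proof. by []. Qed.
Lemma chebUh1 : chebUh 1 = 'X. Proof. by []. Qed.
Lemma chebUhSS j : chebUh j.+2 = 'X * chebUh j.+1 - chebUh j.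
Proof. by rewrite /chebUh /=; case: (chebUh_pair j). Qed.

Lemma size_coef_chebUh j : (size (chebUh j) <= j.+1)%N /\ (chebUh j)`_j = 1.
Proof.
elim/ltn_ind: j => -[|[|j]] IH.
- by rewrite chebUh0 size_poly1 coefC.
- by rewrite chebUh1 size_polyX coefX.
have [size1 lead1] := IH j.+1 (ltnSn _).
have [size0 _] := IH j (ltnW (ltnSn _)).
rewrite chebUhSS coefB coefXM succnK lead1 (nth_default _ (leq_trans size0 _)) //.
split; last exact: subr0.
apply: leq_trans (size_polyD _ _) _.
rewrite size_polyN geq_max; apply/andP; split; last by apply: leq_trans size0 _; lia.
have [->|nz] := eqVneq (chebUh j.+1) 0; first by rewrite mulr0 size_poly0.
by rewrite -commr_polyX size_mulX.
Qed.

Lemma mulX_chebUh j :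
  'X * chebUh j = chebUh j.+1 + (if j is j'.+1 then chebUh j' else 0).
Proof. by case: j => [|j]; rewrite ?chebUh0 ?chebUh1 ?mulr1 ?addr0 // chebUhSS subrK. Qed.

Lemma Xn_chebUh n m : (n <= m)%N ->
  'X^n = \sum_(0 <= j < m.+1) (ballot n j)%:R *: chebUh j.
Proof.
elim: n m => [|n IH] m le_nm.
  by rewrite big_nat_recl //= scale1r big1 ?addr0 // => i _; rewrite scale0r.
case: m le_nm => [|m] // le_nm.
rewrite exprS (IH m.+1) ?(ltnW le_nm) // mulr_sumr.
under eq_bigr do rewrite -scalerAr mulX_chebUh scalerDr.
under [in RHS]eq_bigr do rewrite /= natrD scalerDl.
rewrite !big_split /=; congr (_ + _).
  rewrite [in RHS]big_nat_recl // scale0r add0r.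
  by rewrite [in LHS]big_nat_recr //= ballot_gt ?scale0r ?addr0.
rewrite [in LHS]big_nat_recl //= scaler0 add0r.
by rewrite [in RHS]big_nat_recr //= ballot_gt ?scale0r ?addr0 //; lia.
Qed.

Lemma chebUh_free n (a : nat -> R) :
  \sum_(0 <= j < n.+1) a j *: chebUh j = 0 -> forall j, (j <= n)%N -> a j = 0.
Proof.
elim: n => [|n IH] sum0 j le_jn.
  move: le_jn; rewrite leqn0 => /eqP ->.
  have := congr1 (fun p : {poly R} => p`_0) sum0.
  by rewrite big_nat1 coefZ chebUh0 coefC mulr1 coef0.
have an : a n.+1 = 0.
  have := congr1 (fun p : {poly R} => p`_n.+1) sum0.
  rewrite coef_sum big_nat_recr //= coef0 coefZ (proj2 (size_coef_chebUh _)) mulr1.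
  rewrite big1_seq ?add0r // => i; rewrite mem_index_iota => /andP [_ lt_in].
  by rewrite coefZ nth_default ?mulr0 // (leq_trans (proj1 (size_coef_chebUh i))).
have [->|ne_jn] := eqVneq j n.+1; first by [].
apply: IH; last by move/eqP: ne_jn; lia.
by rewrite -[RHS]sum0 [in RHS]big_nat_recr //= an scale0r addr0.
Qed.

End ChebyshevPolynomials.

Local Open Scope R_scope.

Lemma chebUSS j x : chebU j.+2 x = 2 * x * chebU j.+1 x - chebU j x.
Proof. by rewrite /chebU /=; case: (chebU_pair j x). Qed.

Lemma horner_chebUh j x : horner (chebUh _ j) x = chebU j (x / 2).
Proof.
have half : 2 * (x / 2) = x by field.
elim/ltn_ind: j => -[|[|j]] IH.
- by rewrite chebUh0 hornerC.
- by rewrite chebUh1 hornerX /chebU /= half.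
by rewrite chebUhSS chebUSS hornerD hornerN hornerM hornerX !IH // half.
Qed.

Lemma cheb_coeffs_exist n : exists c : nat -> R,
  forall x, x ^ n = sum_f_R0 (fun j => c j * chebU j (x / 2)) n.
Proof.
exists (fun j => INR (ballot n j)) => x.
rewrite sum_f_R0E RpowE -hornerXn (Xn_chebUh _ (leqnn n)) horner_sum.
by apply: eq_bigr => i _; rewrite hornerZ horner_chebUh INRE.
Qed.

Lemma cheb_coeffs_correct n x :
  x ^ n = sum_f_R0 (fun j => cheb_coeffs n j * chebU j (x / 2)) n.
Proof. exact: (epsilon_spec _ _ (cheb_coeffs_exist n)). Qed.

Local Open Scope ring_scope.

Lemma poly_eq0_of_horner (F : numFieldType) (p : {poly F}) :
  (forall x, p.[x] = 0) -> p = 0.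
Proof.
move=> p0; apply/eqP/negP => /negP nz.
pose xs := [seq (i%:R : F) | i <- iota 0 (size p)].
have roots : all (root p) xs by apply/allP => y /mapP [i _ ->]; rewrite /root p0.
have uniq_xs : uniq_roots xs.
  by rewrite uniq_rootsE map_inj_uniq ?iota_uniq // => a b /eqP; rewrite eqr_nat => /eqP.
by have := max_ring_poly_roots nz roots uniq_xs; rewrite size_map size_iota ltnn.
Qed.

Lemma cheb_coeffs_spec n :
  'X^n = \sum_(0 <= j < n.+1) cheb_coeffs n j *: chebUh _ j.
Proof.
apply/eqP; rewrite -subr_eq0; apply/eqP/poly_eq0_of_horner => x.
rewrite hornerD hornerN hornerXn horner_sum -RpowE.
rewrite cheb_coeffs_correct sum_f_R0E; apply/eqP; rewrite subr_eq0.
by apply/eqP/eq_bigr => i _; rewrite hornerZ horner_chebUh.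
Qed.

Lemma cjn_ballot n j : (j <= n)%N -> cjn j n = (ballot n j)%:R.
Proof.
move=> le_jn; apply/eqP; rewrite -subr_eq0; apply/eqP.
apply: (chebUh_free (a := fun j => cheb_coeffs n j - (ballot n j)%:R)) le_jn.
under eq_bigr do rewrite scalerBl.
by rewrite sumrB -cheb_coeffs_spec -Xn_chebUh ?subrr.
Qed.

(* Distinct integers have distinct exponent vectors, so expanding the product
   of sums covers every term of the left-hand side at most once. *)
Lemma sum_prod_logn_le (R : numDomainType) (P S : seq nat) (K : nat)
    (g : nat -> nat -> R) :
  uniq S ->
  {in S, forall s, [/\ (0 < s)%N, {subset primes s <= P} & forall p, (logn p s <= K)%N]} ->
  (forall p e, 0 <= g p e) ->
  \sum_(s <- S) \prod_(p <- P) g p (logn p s) <= \prod_(p <- P) \sum_(e < K.+1) g p e.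
Proof.
move=> uniqS hS g_ge0; set r := size P.
rewrite (big_nth 0%N) big_mkord bigA_distr_bigA /=.
pose exps (s : nat) : {ffun 'I_r -> 'I_K.+1} :=
  [ffun i : 'I_r => inord (logn (nth 0%N P i) s)].
pose G (f : {ffun 'I_r -> 'I_K.+1}) := \prod_(i < r) g (nth 0%N P i) (f i).
rewrite (eq_big_seq (G \o exps)); last first.
  move=> s /hS [_ _ le_sK]; rewrite (big_nth 0%N) big_mkord.
  by apply: eq_bigr => i _; rewrite ffunE inordK // ltnS.
rewrite -(big_map exps xpredT G) big_uniq; last first.
  rewrite map_inj_in_uniq // => s t /hS [s_gt0 sP sK] /hS [t_gt0 tP tK] eq_st.
  apply: eqn_from_log => // q; have [qP|qP] := boolP (q \in P).
    have q_idx : (index q P < r)%N by rewrite index_mem.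
    have := congr1 (fun f : {ffun _ -> _} => val (f (Ordinal q_idx))) eq_st.
    by rewrite !ffunE /= nth_index // !inordK // ltnS.
  have logn0 u : {subset primes u <= P} -> logn q u = 0%N.
    move=> uP; apply/eqP; rewrite -leqn0 leqNgt logn_gt0.
    by apply: contra qP => /uP.
  by rewrite !logn0.
rewrite [leLHS]big_mkcond /=; apply: ler_sum => f _.
by case: ifP => // _; apply: prodr_ge0 => i _.
Qed.

Lemma sum_c_ellE l : (0 < l)%N -> sum_c_ell l =
  \sum_(d <- divisors l) \prod_(p <- primes l) (ballot (logn p l) (logn p d))%:R.
Proof.
move=> l_gt0; apply: eq_big_seq => d; rewrite -dvdn_divisors // => dvd_dl.
by apply: eq_bigr => p _; rewrite cjn_ballot // dvdn_leq_log.
Qed.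

Lemma sum_c_ell_bounds l : (0 < l)%N ->
  0 <= sum_c_ell l <= \prod_(p <- primes l) 2 ^+ logn p l.
Proof.
move=> l_gt0; rewrite sum_c_ellE //.
have g_ge0 p e : 0 <= (ballot (logn p l) e)%:R :> R by apply: ler0n.
rewrite sumr_ge0 => [|d _]; last exact: prodr_ge0.
apply: le_trans (sum_prod_logn_le (K := l) (divisors_uniq l) _ g_ge0) _.
  move=> d; rewrite -dvdn_divisors // => dvd_dl; have d_gt0 := dvdn_gt0 l_gt0 dvd_dl.
  split=> // p; last exact: leq_trans (dvdn_leq_log p l_gt0 dvd_dl) (ltnW (ltn_logl p l_gt0)).
  rewrite !mem_primes d_gt0 l_gt0 => /and3P [-> _ dvd_pd].
  exact: dvdn_trans dvd_pd dvd_dl.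
apply: ler_prod => p _; rewrite sumr_ge0 //=.
by rewrite -natr_sum -natrX ler_nat sum_ballot_le.
Qed.

Lemma natr_primes_decomp (R : nzSemiRingType) l : (0 < l)%N ->
  l%:R = \prod_(p <- primes l) p%:R ^+ logn p l :> R.
Proof.
move=> l_gt0; rewrite {1}(prod_prime_decomp l_gt0) prime_decompE big_map natr_prod.
by apply: eq_bigr => p _; rewrite natrX.
Qed.

Lemma natr_nu (R : nzSemiRingType) l :
  (nu l)%:R = \prod_(p <- primes l) p.+1%:R ^+ logn p l :> R.
Proof.
rewrite /nu natr_prod; apply: eq_bigr => p _; rewrite -natrX.
by congr _%:R; elim: (logn p l) => //= e ->; rewrite expnS.
Qed.

Lemma Rpower_gt0 x b : 0 < Rpower x b.
Proof. exact/RltP/exp_pos. Qed.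

Lemma RpowerM x y b : 0 < x -> 0 < y -> Rpower (x * y) b = Rpower x b * Rpower y b.
Proof. by move=> /RltP x_gt0 /RltP y_gt0; rewrite -RmultE Rpower_mult_distr. Qed.

Lemma RpowerX x n b : 0 < x -> Rpower (x ^+ n) b = Rpower x b ^+ n.
Proof.
move=> /RltP x_gt0; rewrite -!RpowE -Rpower_pow // Rpower_mult Rmult_comm.
by rewrite -Rpower_mult Rpower_pow //; apply: exp_pos.
Qed.

Lemma Rpower_prod (s : seq nat) (x : nat -> R) (e : nat -> nat) b :
  {in s, forall p, 0 < x p} ->
  Rpower (\prod_(p <- s) x p ^+ e p) b = \prod_(p <- s) Rpower (x p) b ^+ e p.
Proof.
elim: s => [|q s IH] x_gt0; first by rewrite !big_nil /Rpower ln_1 Rmult_0_r exp_0.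
have x_gt0_s : {in s, forall p, 0 < x p} by move=> p ps; rewrite x_gt0 // inE ps orbT.
have xq_gt0 : 0 < x q by rewrite x_gt0 ?mem_head.
rewrite !big_cons RpowerM ?exprn_gt0 ?RpowerX ?IH //.
by rewrite big_seq prodr_gt0 // => p ps; rewrite exprn_gt0 ?x_gt0_s.
Qed.

Local Open Scope R_scope.

(* Per unit of [logn p l], the [p]-part of [l^b / nu(l)^2 * (2 ^ Omega(l))^2]. *)
Definition local_factor (b : R) (p : nat) : R := Rpower (INR p) b * 2 ^ 2 / INR p.+1 ^ 2.

Local Open Scope ring_scope.

Lemma prod_local_factor b l : (0 < l)%N ->
  \prod_(p <- primes l) local_factor b p ^+ logn p l =
  Rpower l%:R b / (nu l)%:R ^+ 2 * (\prod_(p <- primes l) 2 ^+ logn p l) ^+ 2.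
Proof.
move=> l_gt0; rewrite natr_primes_decomp // natr_nu Rpower_prod; last first.
  by move=> p; rewrite mem_primes => /andP [p_pr _]; rewrite ltr0n prime_gt0.
under eq_bigr do rewrite /local_factor RdivE !RpowE !INRE !exprMn exprVn -exprAC.
by rewrite !big_split /= prodfV !prodrXl -expr2 mulrAC.
Qed.

(* Rankin's trick: for [l > Y >= 1] and [s >= 0] one has [1 <= (l / Y) ^ s]. *)
Lemma term_le_rankin eps s Y l : 0 <= s -> 1 <= Y -> (0 < l)%N -> Y < l%:R ->
  term eps l <= Rpower Y (- s) * \prod_(p <- primes l) local_factor (1 + eps + s) p ^+ logn p l.
Proof.
move=> s_ge0 Y_ge1 l_gt0 lt_Yl.
have Y_gt0 : 0 < Y by apply: lt_le_trans Y_ge1; exact: ltr01.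
have [sum_ge0 sum_le] := andP (sum_c_ell_bounds l_gt0).
have rankin : Rpower l%:R (1 + eps) <= Rpower Y (- s) * Rpower l%:R (1 + eps + s).
  have YsK : Rpower Y (- s) * Rpower Y s = 1.
    by rewrite -RmultE -Rpower_plus Rplus_opp_l Rpower_O //; exact/RltP.
  rewrite (Rpower_plus (1 + eps) s) RmultE mulrCA ler_peMr ?(ltW (Rpower_gt0 _ _)) //.
  rewrite -[leLHS]YsK ler_wpM2l ?(ltW (Rpower_gt0 _ _)) //.
  by apply/RleP/Rle_Rpower_l; [exact/RleP | split; [exact/RltP | exact/RleP/ltW]].
rewrite prod_local_factor // /term RdivE !RpowE !INRE !(mulrA (Rpower Y (- s))).
apply: ler_pM; rewrite ?exprn_ge0 //.
- by rewrite mulr_ge0 ?invr_ge0 ?exprn_ge0 // ltW ?Rpower_gt0.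
- by rewrite ler_wpM2r ?invr_ge0 ?exprn_ge0.
by rewrite lerXn2r ?nnegrE ?(le_trans sum_ge0).
Qed.

Local Open Scope R_scope.

Lemma Rpower_2_two_gamma0 : Rpower 2 (2 * gamma0) = 9 / 8.
Proof.
have ln2_gt0 : 0 < ln 2 by rewrite -ln_1; apply: ln_increasing; lra.
rewrite /Rpower /gamma0.
have -> : 2 * (ln (3 / 2) / ln 2 - 1 / 2) * ln 2 = ln (3 / 2) + ln (3 / 2) + - ln 2.
  by field; lra.
by rewrite !exp_plus exp_Ropp !exp_ln; lra.
Qed.

(* Both bounds follow from [2 ^ (2 gamma0) = 9/8], since [1 < 9/8] and [(9/8)^4 < 2]. *)
Lemma two_gamma0_bounds : 0 < 2 * gamma0 <= 1 / 4.
Proof.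
split; [apply: Rnot_le_lt => le0 | apply: Rnot_lt_le => lt14].
  have := Rle_Rpower 2 _ _ ltac:(lra) le0.
  by rewrite Rpower_2_two_gamma0 Rpower_O; lra.
have := Rpower_lt 2 _ _ ltac:(lra) lt14.
rewrite Rpower_2_two_gamma0; set a := Rpower 2 (1 / 4) => lt_a98.
have a_gt0 : 0 < a by apply: exp_pos.
have : a ^ 4 = 2.
  by rewrite -Rpower_pow // Rpower_mult (_ : 1 / 4 * INR 4 = 1) ?Rpower_1 //=; lra.
have : a * a < 81 / 64 by nra.
by rewrite /=; nra.
Qed.

Lemma Rpower_two_gamma0_le x y :
  1 <= x -> 0 < y -> x <= y ^ 4 -> Rpower x (2 * gamma0) <= y.
Proof.
move=> x_ge1 y_gt0 le_xy4; have [g_gt0 g_le] := two_gamma0_bounds.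
have y_ge1 : 1 <= y.
  apply: Rnot_lt_le => y_lt1.
  by have := pow_lt_1_compat y 4 (conj (Rlt_le _ _ y_gt0) y_lt1) ltac:(lia); lra.
apply: (Rle_trans _ (Rpower (y ^ 4) (2 * gamma0))); first by apply: Rle_Rpower_l; lra.
rewrite -Rpower_pow // Rpower_mult -{2}(Rpower_1 y) //.
apply: Rle_Rpower => //=; nra.
Qed.

Lemma mul_Rpower_two_gamma0_le c x y : 0 <= c -> 1 <= x -> 0 < y -> x <= y ^ 4 ->
  c * x * y <= (x + 1) ^ 2 -> c * x * Rpower x (2 * gamma0) <= (x + 1) ^ 2.
Proof.
move=> c_ge0 x_ge1 y_gt0 le_xy4; apply: Rle_trans.
by apply: Rmult_le_compat_l; [nra | exact: Rpower_two_gamma0_le].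
Qed.

Lemma four_mul_Rpower_two_gamma0_le (p : nat) : (2 <= p)%N ->
  4 * INR p * Rpower (INR p) (2 * gamma0) <= (INR p + 1) ^ 2.
Proof.
move=> p_ge2; have [p_le6 | p_gt6] := leqP p 6.
  move: p_ge2 p_le6; case: p => [|[|[|[|[|[|[|p]]]]]]] // _ _.
  - by rewrite (_ : INR 2 = 2) ?Rpower_2_two_gamma0 /=; lra.
  - by apply: (mul_Rpower_two_gamma0_le (y := 4 / 3)); simpl; lra.
  - by apply: (mul_Rpower_two_gamma0_le (y := 25 / 16)); simpl; lra.
  - by apply: (mul_Rpower_two_gamma0_le (y := 9 / 5)); simpl; lra.
  by apply: (mul_Rpower_two_gamma0_le (y := 49 / 24)); simpl; lra.
have /= p_ge7 : INR 7 <= INR p by apply: le_INR; lia.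
apply: (mul_Rpower_two_gamma0_le (y := INR p / 4)); try lra.
have : 7 * 7 * 7 <= INR p * INR p * INR p by nra.
simpl; nra.
Qed.

Lemma eight_mul_Rpower_two_gamma0_le (p : nat) : (16 <= p)%N ->
  8 * INR p * Rpower (INR p) (2 * gamma0) <= (INR p + 1) ^ 2.
Proof.
move=> p_ge16; have /= p_ge16' : INR 16 <= INR p by apply: le_INR; lia.
apply: (mul_Rpower_two_gamma0_le (y := INR p / 8)); try lra.
have : 16 * 16 * 16 <= INR p * INR p * INR p by nra.
simpl; nra.
Qed.

Lemma local_factor_ge0 b p : 0 <= local_factor b p.
Proof.
rewrite /local_factor /Rdiv; apply: Rmult_le_pos; last first.
  by apply/Rlt_le/Rinv_0_lt_compat/pow_lt/lt_0_INR; lia.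
by apply: Rmult_le_pos; [left; apply: exp_pos | lra].
Qed.

(* At the critical exponent [1 + 2 gamma0] the local factor at [p = 2] is
   exactly [1]; lowering the exponent by [eps] gains the factor [p ^ - eps]. *)
Lemma local_factor_critical_le (p : nat) eps c : 0 <= eps -> (2 <= p)%N -> 0 < c ->
  c * INR p * Rpower (INR p) (2 * gamma0) <= (INR p + 1) ^ 2 ->
  local_factor (1 + 2 * gamma0 - eps) p <= 4 / c * Rpower 2 (- eps).
Proof.
move=> eps_ge0 p_ge2 c_gt0 crit.
have p_ge : 2 <= INR p by apply: (le_INR 2); lia.
have A_gt0 : 0 < Rpower (INR p) (2 * gamma0) by apply: exp_pos.
have B_le : Rpower (INR p) (- eps) <= Rpower 2 (- eps).
  rewrite !Rpower_Ropp; apply: Rinv_le_contravar; first exact: exp_pos.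
  by apply: Rle_Rpower_l; lra.
have lfE : local_factor (1 + 2 * gamma0 - eps) p = 4 / c * Rpower (INR p) (- eps) *
    (c * INR p * Rpower (INR p) (2 * gamma0) / (INR p + 1) ^ 2).
  rewrite /local_factor /Rminus !Rpower_plus Rpower_1 ?S_INR; [field; split |]; lra.
have B_gt0 : 0 < Rpower (INR p) (- eps) by apply: exp_pos.
rewrite lfE -[X in _ <= X]Rmult_1_r; apply: Rmult_le_compat.
- by apply: Rmult_le_pos; [apply: Rlt_le; apply: Rdiv_lt_0_compat |]; lra.
- apply/Rlt_le/Rdiv_lt_0_compat; last by apply: pow_lt; lra.
  by apply: Rmult_lt_0_compat => //; apply: Rmult_lt_0_compat; lra.
- by apply: Rmult_le_compat_l => //; apply: Rlt_le; apply: Rdiv_lt_0_compat; lra.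
have D_gt0 : 0 < (INR p + 1) ^ 2 by apply: pow_lt; lra.
apply: (Rle_trans _ ((INR p + 1) ^ 2 * / (INR p + 1) ^ 2)).
  by apply: Rmult_le_compat_r => //; exact/Rlt_le/Rinv_0_lt_compat.
by rewrite Rinv_r //; lra.
Qed.

Lemma local_factor_le_rho (p : nat) eps : 0 <= eps -> (2 <= p)%N ->
  local_factor (1 + 2 * gamma0 - eps) p <= Rpower 2 (- eps).
Proof.
move=> eps_ge0 p_ge2.
have := local_factor_critical_le eps_ge0 p_ge2 _ (four_mul_Rpower_two_gamma0_le p_ge2).
by rewrite /Rdiv Rinv_r ?Rmult_1_l; [apply; lra | lra].
Qed.

Lemma local_factor_le_half (p : nat) eps : 0 <= eps -> (16 <= p)%N ->
  local_factor (1 + 2 * gamma0 - eps) p <= / 2.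
Proof.
move=> eps_ge0 p_ge16; have p_ge2 : (2 <= p)%N by apply: leq_trans p_ge16.
have := local_factor_critical_le eps_ge0 p_ge2 _ (eight_mul_Rpower_two_gamma0_le p_ge16).
have : Rpower 2 (- eps) <= 1.
  by rewrite -(Rpower_O 2); [apply: Rle_Rpower |]; lra.
by move=> rho_le1 /(_ ltac:(lra)); lra.
Qed.

Lemma Rpower_2_opp_lt1 eps : 0 < eps -> Rpower 2 (- eps) < 1.
Proof. by move=> eps_gt0; rewrite -(Rpower_O 2); [apply: Rpower_lt |]; lra. Qed.

Local Open Scope ring_scope.

Lemma sum_expr_le_inv (F : realFieldType) (x c : F) K :
  0 <= x -> x <= c -> c < 1 -> \sum_(e < K) x ^+ e <= (1 - c)^-1.
Proof.
move=> x_ge0 le_xc c_lt1.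
have x_lt1 : x < 1 by apply: le_lt_trans c_lt1.
have geom : (1 - x) * \sum_(e < K) x ^+ e = 1 - x ^+ K.
  by rewrite -opprB mulNr -subrX1 opprB.
rewrite -[leRHS]div1r ler_pdivlMr ?subr_gt0 // mulrC.
apply: le_trans (_ : (1 - x) * \sum_(e < K) x ^+ e <= _).
  by rewrite ler_wpM2r ?lerB ?sumr_ge0 // => e _; rewrite exprn_ge0.
by rewrite geom gerBl exprn_ge0.
Qed.

Lemma sum_local_factor_le (p : nat) eps K : 0 < eps -> prime p ->
  \sum_(e < K) local_factor (1 + 2 * gamma0 - eps) p ^+ e <=
  2 * (if (p < 16)%N then (1 - Rpower 2 (- eps))^-1 else 1).
Proof.
move=> /RltP eps_gt0 p_pr; have p_ge2 := prime_gt1 p_pr.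
have eps_ge0 := Rlt_le _ _ eps_gt0.
have lf_ge0 : 0 <= local_factor (1 + 2 * gamma0 - eps) p by apply/RleP/local_factor_ge0.
case: ltnP => [_ | p_ge16].
  have rho_lt1 : Rpower 2 (- eps) < 1 by apply/RltP/Rpower_2_opp_lt1.
  have lf_le : local_factor (1 + 2 * gamma0 - eps) p <= Rpower 2 (- eps).
    exact/RleP/local_factor_le_rho.
  apply: le_trans (sum_expr_le_inv K lf_ge0 lf_le rho_lt1) _.
  by rewrite ler_peMl ?invr_ge0 ?subr_ge0 ?(ltW rho_lt1) ?(ler_nat _ 1 2).
have half_lt1 : 2^-1 < 1 :> R by rewrite invf_lt1 ?ltr0n ?ltr1n.
have lf_le : local_factor (1 + 2 * gamma0 - eps) p <= 2^-1.
  exact/RleP/local_factor_le_half.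
apply: le_trans (sum_expr_le_inv K lf_ge0 lf_le half_lt1) _.
by rewrite mulr1 {1}(splitr 1) mul1r addrK invrK.
Qed.

Lemma prod_small_le (F : numDomainType) (B : F) (P : seq nat) k : 1 <= B -> uniq P ->
  \prod_(p <- P) (if (p < k)%N then B else 1) <= B ^+ k.
Proof.
move=> B_ge1 uniqP; rewrite -big_mkcond big_const_seq iter_mulr_1 ler_weXn2l //.
rewrite -size_filter -[k in (_ <= k)%N](size_iota 0).
apply: uniq_leq_size; first exact: filter_uniq.
by move=> p; rewrite mem_filter mem_iota => /andP [].
Qed.

(* The [2 ^ omega(L)] divisors [L`_pi], for [pi] ranging over the sets of
   prime factors of [L], are distinct. *)
Lemma exp2_size_primes_le_tau L : (0 < L)%N -> (2 ^ size (primes L) <= tau L)%N.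
Proof.
move=> L_gt0; set P := primes L.
pose part (m : (size P).-tuple bool) := (L`_[pred p | nth false m (index p P)])%N.
have part_inj : injective part.
  move=> m1 m2 eq_part; apply: eq_from_tnth => i; rewrite !(tnth_nth false).
  have mE (m : (size P).-tuple bool) : nth false m i = (nth 0%N P i \in primes (part m)).
    by rewrite primes_part mem_filter mem_nth // andbT inE /= index_uniq ?primes_uniq.
  by rewrite !mE eq_part.
rewrite -[2%N]card_bool -card_tuple cardE -(size_map part) /tau.
apply: uniq_leq_size; first by rewrite map_inj_uniq ?enum_uniq.
by move=> _ /mapP [m _ ->]; rewrite -dvdn_divisors ?dvdn_part.
Qed.

Lemma prod_primes_widen (F : comPzSemiRingType) l (P : seq nat) (x : nat -> F) :
  uniq P -> {subset primes l <= P} ->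
  \prod_(p <- primes l) x p ^+ logn p l = \prod_(p <- P) x p ^+ logn p l.
Proof.
move=> uniqP sub_lP; symmetry.
rewrite (bigID [in primes l]) /= [X in _ * X]big1 ?mulr1 => [|p p_l]; last first.
  suff -> : logn p l = 0%N by [].
  by apply/eqP; rewrite -leqn0 leqNgt logn_gt0.
rewrite -big_filter; apply: perm_big; apply: uniq_perm; rewrite ?primes_uniq ?filter_uniq //.
by move=> p; rewrite mem_filter; case: (boolP (p \in primes l)) => // /sub_lP ->.
Qed.

Lemma divides_pow_inf_primes l L : (0 < L)%N -> divides_pow_inf l L ->
  {subset primes l <= primes L}.
Proof.
move=> L_gt0 /andP [_ /allP dvd_L] p p_l.
by rewrite mem_primes L_gt0 dvd_L // !andbT; move: p_l; rewrite mem_primes => /and3P [].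
Qed.

Lemma partial_sum_le eps s L Y N : 0 <= s -> 1 <= Y -> (0 < L)%N ->
  partial_sum eps L Y N <= Rpower Y (- s) *
    \prod_(p <- primes L) \sum_(e < N.+1) local_factor (1 + eps + s) p ^+ e.
Proof.
move=> s_ge0 Y_ge1 L_gt0; set lf := local_factor (1 + eps + s).
pose S := [seq l <- index_iota 0 N.+1 | divides_pow_inf l L && (Y < l%:R)].
have lf_ge0 p e : 0 <= lf p ^+ e by apply/exprn_ge0/RleP/local_factor_ge0.
apply: le_trans (_ : \sum_(l <- S) Rpower Y (- s) *
    \prod_(p <- primes L) lf p ^+ logn p l <= _).
  rewrite /partial_sum sum_f_R0E big_filter [leRHS]big_mkcond; apply: ler_sum => l _.
  have rhs_ge0 : 0 <= Rpower Y (- s) * \prod_(p <- primes L) lf p ^+ logn p l.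
    by rewrite mulr_ge0 ?prodr_ge0 ?(ltW (Rpower_gt0 _ _)).
  case dvd_lL: (divides_pow_inf l L) => //=.
  case: Rlt_dec => [/RltP | _] /=; last by case: ifP.
  rewrite INRE => lt_Yl; rewrite lt_Yl.
  have l_gt0 : (0 < l)%N by case/andP: dvd_lL.
  rewrite -(prod_primes_widen _ (primes_uniq L) (divides_pow_inf_primes L_gt0 dvd_lL)).
  exact: term_le_rankin.
rewrite -mulr_sumr ler_wpM2l ?(ltW (Rpower_gt0 _ _)) //.
apply: (sum_prod_logn_le (g := fun p e => lf p ^+ e)) => //; first exact/filter_uniq/iota_uniq.
move=> l; rewrite mem_filter mem_index_iota => /andP [/andP [dvd_lL _] /andP [_ lt_lN]].
have l_gt0 : (0 < l)%N by case/andP: dvd_lL.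
split=> // [|p]; first exact: divides_pow_inf_primes.
exact: leq_trans (ltnW (ltn_logl p l_gt0)) lt_lN.
Qed.

Lemma prod_sum_local_factor_le eps L N : 0 < eps -> (0 < L)%N ->
  \prod_(p <- primes L) \sum_(e < N.+1) local_factor (1 + 2 * gamma0 - eps) p ^+ e <=
  (tau L)%:R * (1 - Rpower 2 (- eps))^-1 ^+ 16.
Proof.
move=> /RltP eps_gt0 L_gt0; set B := (1 - _)^-1.
have B_ge1 : 1 <= B.
  have /RltP rho_lt1 := Rpower_2_opp_lt1 eps_gt0.
  rewrite invf_ge1 ?subr_gt0 // gerBl; exact/ltW/Rpower_gt0.
apply: le_trans (_ : \prod_(p <- primes L) (2 * if (p < 16)%N then B else 1) <= _).
  rewrite big_seq [leRHS]big_seq; apply: ler_prod => p; rewrite mem_primes => /andP [p_pr _].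
  rewrite sum_local_factor_le ?andbT //; last exact/RltP.
  by apply: sumr_ge0 => e _; apply/exprn_ge0/RleP/local_factor_ge0.
rewrite big_split /= big_const_seq iter_mulr_1 count_predT.
apply: ler_pM; rewrite ?exprn_ge0 ?prod_small_le ?primes_uniq //.
- by apply: prodr_ge0 => p _; case: ifP => // _; apply: le_trans B_ge1.
by rewrite -natrX ler_nat exp2_size_primes_le_tau.
Qed.

Local Open Scope R_scope.

Theorem corollary6p4 :
  exists eps0 : R, 0 < eps0 /\
    forall eps : R, 0 < eps < eps0 ->
      exists C : R, 0 < C /\
        forall (L : nat) (Y : R), (0 < L)%nat -> 1 <= Y ->
          forall N : nat,
            partial_sum eps L Y N
              <= C * Rpower Y (- 2 * gamma0 + 2 * eps) * INR (tau L).
Proof.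
exists gamma0; split; first by have := two_gamma0_bounds; lra.
move=> eps [eps_gt0 eps_lt]; pose B := / (1 - Rpower 2 (- eps)).
have B_gt0 : 0 < B.
  by apply/Rinv_0_lt_compat; have := Rpower_2_opp_lt1 eps_gt0; lra.
exists (B ^ 16); split=> [|L Y L_gt0 Y_ge1 N]; first exact: pow_lt.
pose s := 2 * gamma0 - 2 * eps.
have s_ge0 : 0 <= s by rewrite /s; lra.
have expE : 1 + eps + s = 1 + 2 * gamma0 - eps by rewrite /s; ring.
have /RleP s_ge0' := s_ge0; have /RleP Y_ge1' := Y_ge1.
have := partial_sum_le eps N s_ge0' Y_ge1' L_gt0.
rewrite expE => /RleP /Rle_trans; apply.
have -> : -2 * gamma0 + 2 * eps = - s by rewrite /s; ring.
rewrite (Rmult_comm (B ^ 16)) Rmult_assoc (Rmult_comm (B ^ 16)).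
apply: Rmult_le_compat_l; first exact/Rlt_le/exp_pos.
apply/RleP; rewrite RmultE RpowE INRE.
by apply: prod_sum_local_factor_le => //; apply/RltP.
Qed.
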